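(* Let $m\ge 2$, $n=2m$, let $t$ be an integer with $1\le t\le m-1$ such that $m/\gcd(m,t)$ is odd, and let $\gamma(X_0,\ldots,X_{m-1})\in\mathbb{F}_2[X_0,\ldots,X_{m-1}]$ be a reduced polynomial. Define $f_t:\mathbb{F}_2^n\to\mathbb{F}_2$ by $$f_t(x)=\sum_{i=0}^{n-1}\left(x_ix_{i+t}x_{i+m}+x_ix_{i+t}\right)+\sum_{i=0}^{m-1}x_ix_{i+m}+\gamma(x_0+x_m,\,x_1+x_{m+1},\,\ldots,\,x_{m-1}+x_{2m-1}),$$ where indices of $x$ are taken modulo $n$. Then $f_t$ is a bent function. Moreover, if $\gamma$ is rotation symmetric (i.e. $\gamma(X_0,X_1,\ldots,X_{m-1})=\gamma(X_1,\ldots,X_{m-1},X_0)$) of algebraic degree $d\ge 3$, then $f_t$ is a rotation symmetric bent function of algebraic degree $d$.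
   Context: Every Boolean function $f:\mathbb{F}_2^n\to\mathbb{F}_2$ is identified with its algebraic normal form, a reduced polynomial $\sum_{u\in\mathbb{F}_2^n}c_u\prod_{i=0}^{n-1}x_i^{u_i}$ with $c_u\in\mathbb{F}_2$ (each variable appears with exponent at most 1); its algebraic degree is the largest number of variables in a monomial with nonzero coefficient. $f$ is rotation symmetric if $f(x_1,x_2,\ldots,x_{n-1},x_0)=f(x_0,x_1,\ldots,x_{n-1})$ for all $x\in\mathbb{F}_2^n$. The Walsh transform is $\mathcal{W}_f(b)=\sum_{x\in\mathbb{F}_2^n}(-1)^{f(x)+\sum_i x_ib_i}$, and $f$ is bent if $\mathcal{W}_f(b)=\pm 2^{n/2}$ for all $b\in\mathbb{F}_2^n$. *)

From mathcomp Require Import all_boot all_order all_algebra.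
Set Implicit Arguments. Unset Strict Implicit. Unset Printing Implicit Defensive.
Import GRing.Theory Num.Theory.

Notation vec n := {ffun 'I_n -> bool}.

Definition xat (n : nat) (x : vec n) (k : nat) : bool :=
  [exists i : 'I_n, (val i == k %% n) && x i].

(* A reduced polynomial (ANF) in n variables over F_2:
   its coefficient family (c_u)_{u in F_2^n}; the monomial for u is prod_{u_i = 1} x_i. *)
Notation anf n := {ffun vec n -> bool}.

Definition anf_eval (n : nat) (c : anf n) (x : vec n) : bool :=
  \big[addb/false]_(u : vec n) (c u && [forall i, u i ==> x i]).

Definition wt (n : nat) (u : vec n) : nat := #|[set i | u i]|.

Definition anf_deg (n : nat) (c : anf n) : nat := \max_(u | c u) wt u.

(* f has algebraic degree d: the (unique) reduced polynomial representing f has degree d *)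
Definition has_alg_degree (n : nat) (f : vec n -> bool) (d : nat) : Prop :=
  exists c : anf n, (forall x, anf_eval c x = f x) /\ anf_deg c = d.

Definition rot (n : nat) (x : vec n) : vec n := [ffun i : 'I_n => xat x (i + 1)].

Definition rotation_symmetric (n : nat) (f : vec n -> bool) : Prop :=
  forall x, f (rot x) = f x.

Definition dotb (n : nat) (x b : vec n) : bool := \big[addb/false]_(i < n) (x i && b i).

Definition walsh (n : nat) (f : vec n -> bool) (b : vec n) : int :=
  (\sum_(x : vec n) (-1) ^+ (f x (+) dotb x b))%R.

Definition bent (n : nat) (f : vec n -> bool) : Prop :=
  forall b, walsh f b = Posz (2 ^ n./2) \/ walsh f b = (- Posz (2 ^ n./2))%R.

Definition f_t (m t : nat) (gamma : anf m) (x : vec (m.*2)) : bool :=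
  (\big[addb/false]_(i < m.*2)
      ((xat x i && xat x (i + t) && xat x (i + m)) (+) (xat x i && xat x (i + t))))
  (+) (\big[addb/false]_(i < m) (xat x i && xat x (i + m)))
  (+) anf_eval gamma [ffun j : 'I_m => xat x j (+) xat x (j + m)].

From Pilot Require Import Defs.
From mathcomp Require Import all_boot all_order all_algebra.
From mathcomp Require Import zify.
Set Implicit Arguments. Unset Strict Implicit. Unset Printing Implicit Defensive.
Import GRing.Theory Num.Theory.

(* Write x = vec_of_pair (u, y), i.e. x_i = y_i and x_(i+m) = y_i + u_i for i < m.  Then
   f_t(x) + b.x = y.(pi(u) + b') + h(u) with pi(u)_k = u_k u_(k+t) + 1 + u_k + u_(k-t), so the
   Walsh value at b is 2^m times the sum of (-1)^h(u) over the u with pi(u) = b', where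
   b'_k = b_k + b_(k+m).  The map pi
   is injective: on each orbit of k |-> k + t, of odd length m / gcd(m, t), two preimages obey
   a recurrence whose only periodic solutions of odd period are trivial.  Hence exactly one u
   contributes and W(b) = +-2^m.
   Every summand of f_t is a cyclically invariant sum, which gives rotation symmetry.  The
   cubic and quadratic parts have degree at most 3 <= d; conversely, by Moebius inversion the
   ANF coefficient of x^v, for a degree-d monomial x^v of gamma in x_0, ..., x_(m-1), is that
   of the restriction x_m = ... = x_(2m-1) = 0, which is gamma plus a quadratic. *)

Lemma xat_eqmod n (x : vec n) k1 k2 : k1 = k2 %[mod n] -> xat x k1 = xat x k2.
Proof. by rewrite /xat => ->. Qed.

Lemma xatE n (x : vec n) k (n0 : 0 < n) : xat x k = x (Ordinal (ltn_pmod k n0)).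
Proof.
apply/existsP/idP => [[i /andP[/eqP Hi xi]]|xk].
  by have -> : Ordinal (ltn_pmod k n0) = i by apply: val_inj; rewrite /= Hi.
by exists (Ordinal (ltn_pmod k n0)); rewrite /= eqxx.
Qed.

Lemma xat_ord n (x : vec n) (i : 'I_n) : xat x i = x i.
Proof.
have n0 : 0 < n by case: i => i /=; case: n x.
by rewrite (xatE _ _ n0); congr (x _); apply: val_inj; rewrite /= modn_small.
Qed.

Lemma xatDr n (x : vec n) k : xat x (k + n) = xat x k.
Proof. by apply: xat_eqmod; rewrite modnDr. Qed.

Lemma xatDMr n (x : vec n) k c : xat x (k + c * n) = xat x k.
Proof. by apply: xat_eqmod; rewrite addnC modnMDl. Qed.

Lemma xat_ffun n (F : nat -> bool) k : 0 < n -> xat [ffun j : 'I_n => F j] k = F (k %% n).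
Proof. by move=> n0; rewrite (xatE _ _ n0) ffunE. Qed.

Lemma xat_rot n (x : vec n) k : 0 < n -> xat (Defs.rot x) k = xat x (k + 1).
Proof. by move=> n0; rewrite (xatE _ _ n0) ffunE; apply: xat_eqmod; rewrite modnDml. Qed.

Lemma periodic_modn (F : nat -> bool) n :
  (forall k, F (k + n) = F k) -> forall k, F (k %% n) = F k.
Proof.
move=> Fper k; rewrite {2}(divn_eq k n); elim: (k %/ n) => [|c IH]; first by rewrite add0n.
by rewrite mulSnr addnAC Fper.
Qed.

Lemma dotbE n (x b : vec n) : dotb x b = \big[addb/false]_(i < n) (xat x i && xat b i).
Proof. by apply: eq_bigr => i _; rewrite !xat_ord. Qed.

Section CyclicBig.
Variables (R : Type) (idx : R) (op : Monoid.com_law idx).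

Lemma big_ord_double m (F : nat -> R) :
  \big[op/idx]_(i < m.*2) F i = \big[op/idx]_(i < m) op (F i) (F (i + m)).
Proof.
rewrite -(big_mkord xpredT F) -addnn (big_cat_nat _ (leq_addr m m)) //=.
rewrite (big_addn 0 _ m) addnK big_mkord big_split /=.
by congr (op _ _); rewrite big_mkord.
Qed.

Lemma big_ord_shift n (G : nat -> R) s : (forall k, G (k + n) = G k) ->
  \big[op/idx]_(i < n) G (i + s) = \big[op/idx]_(i < n) G i.
Proof.
have shift1 H : (forall k, H (k + n) = H k) ->
    \big[op/idx]_(i < n) H (i + 1) = \big[op/idx]_(i < n) H i.
  case: n => [|n] Hper; first by rewrite !big_ord0.
  rewrite big_ord_recr big_ord_recl /= -(Hper 0) add0n addn1 Monoid.mulmC.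
  by congr (op _ _); apply: eq_bigr => i _; rewrite /bump /= add1n addn1.
move=> Gper; elim: s => [|s IH]; first by apply: eq_bigr => i _; rewrite addn0.
rewrite -IH -(shift1 (fun k => G (k + s))); last by move=> k; rewrite addnAC Gper.
by apply: eq_bigr => i _; rewrite addnAC addn1 addnS.
Qed.

End CyclicBig.

Section AlgebraicNormalForm.
Variable n : nat.
Implicit Types (u v w x : vec n) (f g : vec n -> bool) (c : anf n).

Definition subv u v := [forall i, u i ==> v i].

Lemma subv_refl u : subv u u.
Proof. by apply/forallP => i; apply/implyP. Qed.

Lemma subv_trans v u w : subv u v -> subv v w -> subv u w.
Proof.
move=> /forallP uv /forallP vw; apply/forallP => i; apply/implyP => ui.
exact: implyP (vw i) (implyP (uv i) ui).
Qed.

Lemma subv_anti u v : subv u v -> subv v u -> u = v.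
Proof.
move=> /forallP uv /forallP vu; apply/ffunP => i.
by move: (uv i) (vu i); case: (u i); case: (v i).
Qed.

(* Flipping a coordinate in which [u] and [v] differ pairs off the interval [v, u]. *)
Lemma big_addb_interval v u :
  \big[addb/false]_(w | subv v w && subv w u) true = (v == u).
Proof.
have [vu|nvu] := boolP (subv v u); last first.
  rewrite big1 => [|w /andP[vw wu]]; last by rewrite (subv_trans vw wu) in nvu.
  by case: eqP nvu => // ->; rewrite subv_refl.
have [->|neq_vu] := eqVneq v u.
  rewrite (bigD1 u) /= ?subv_refl // big1 // => w /andP[/andP[uw wu] nwu].
  by rewrite (subv_anti wu uw) eqxx in nwu.
have [i /andP[ui nvi]] : exists i, u i && ~~ v i.
  apply/existsP; apply: contraR neq_vu; rewrite negb_exists => /forallP h.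
  apply/eqP/subv_anti => //; apply/forallP => j; move: (h j).
  by case: (u j); case: (v j).
pose flip w : vec n := [ffun j => w j (+) (j == i)].
have flipK : involutive flip.
  by move=> w; apply/ffunP => j; rewrite !ffunE -addbA addbb addbF.
have subv_flip w : subv v (flip w) = subv v w.
  apply/forallP/forallP => h j; move: (h j); rewrite ?ffunE;
  by case: (eqVneq j i) => [->|_]; rewrite ?(negbTE nvi) // addbF.
have flip_subv w : subv (flip w) u = subv w u.
  apply/forallP/forallP => h j; move: (h j); rewrite ?ffunE;
  by case: (eqVneq j i) => [->|_]; rewrite ?ui ?implybT // addbF.
rewrite (bigID (fun w : vec n => w i)) /= [X in X (+) _](reindex_inj (inv_inj flipK)) /=.
rewrite (eq_bigl (fun w => (subv v w && subv w u) && ~~ w i)) ?addbb // => w.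
by rewrite subv_flip flip_subv ffunE eqxx; case: (w i); rewrite ?andbF ?andbT.
Qed.

Definition moebius f u : bool := \big[addb/false]_(w | subv w u) f w.

Lemma moebius_anf_eval c u : moebius (anf_eval c) u = c u.
Proof.
rewrite /moebius /anf_eval (exchange_big_dep xpredT) //=.
rewrite (eq_bigr (fun v => c v && (v == u))) => [|v _].
  rewrite (bigD1 u) //= eqxx andbT big1 ?addbF // => v /negbTE ->.
  by rewrite andbF.
rewrite -big_distrr /=; congr (_ && _).
rewrite -big_addb_interval big_mkcond [RHS]big_mkcond /=.
apply: eq_bigr => w _; rewrite -/(subv v w) andbT.
by case: (subv w u); case: (subv v w).
Qed.

Lemma moebius_addb f g u :
  moebius (fun x => f x (+) g x) u = moebius f u (+) moebius g u.
Proof. exact: big_split. Qed.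

Definition has_deg_le f k :=
  exists c, (forall x, anf_eval c x = f x) /\ (forall u, c u -> wt u <= k).

Lemma eq_has_deg_le f g k : f =1 g -> has_deg_le f k -> has_deg_le g k.
Proof. by move=> fg [c [cf cwt]]; exists c; split => // x; rewrite cf. Qed.

Lemma has_deg_le_leq f k k' : k <= k' -> has_deg_le f k -> has_deg_le f k'.
Proof. by move=> kk' [c [cf cwt]]; exists c; split => // u /cwt /leq_trans; apply. Qed.

Lemma has_deg_le_false k : has_deg_le (fun _ => false) k.
Proof.
exists [ffun => false]; split => [x|u]; last by rewrite ffunE.
by rewrite /anf_eval big1 // => u _; rewrite ffunE.
Qed.

Lemma has_deg_le_monomial u : has_deg_le (subv u) (wt u).
Proof.
exists [ffun v => v == u]; split => [x|v]; last by rewrite ffunE => /eqP ->.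
rewrite /anf_eval (bigD1 u) //= ffunE eqxx big1 ?addbF // => v /negbTE nvu.
by rewrite ffunE nvu.
Qed.

Lemma has_deg_le_true : has_deg_le (fun _ => true) 0.
Proof.
have wt0 : wt ([ffun => false] : vec n) <= 0.
  by rewrite leqn0 cards_eq0; apply/eqP/setP => i; rewrite !inE ffunE.
apply: eq_has_deg_le (has_deg_le_leq wt0 (has_deg_le_monomial _)) => x.
by apply/forallP => i; rewrite ffunE.
Qed.

Lemma has_deg_le_addb f g k : has_deg_le f k -> has_deg_le g k ->
  has_deg_le (fun x => f x (+) g x) k.
Proof.
move=> [c [cf cwt]] [c' [cg c'wt]]; exists [ffun u => c u (+) c' u]; split.
  move=> x; rewrite -cf -cg /anf_eval -big_split /=.
  by apply: eq_bigr => u _; rewrite ffunE andb_addl.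
by move=> u; rewrite ffunE; case: (c u) (cwt u); case: (c' u) (c'wt u) => // _ ->.
Qed.

Lemma has_deg_le_big_addb (I : Type) (r : seq I) (P : pred I) (F : I -> vec n -> bool) k :
  (forall i, P i -> has_deg_le (F i) k) ->
  has_deg_le (fun x => \big[addb/false]_(i <- r | P i) F i x) k.
Proof.
move=> Fdeg; elim: r => [|i r IH].
  by apply: eq_has_deg_le (has_deg_le_false k) => x; rewrite big_nil.
have [Pi|nPi] := boolP (P i).
  by apply: eq_has_deg_le (has_deg_le_addb (Fdeg i Pi) IH) => x; rewrite big_cons Pi.
by apply: eq_has_deg_le IH => x; rewrite big_cons (negbTE nPi).
Qed.

Lemma wt_union u v : wt [ffun i => u i || v i] <= wt u + wt v.
Proof.
rewrite /wt (_ : [set i | _] = [set i | u i] :|: [set i | v i]) ?cardsU ?leq_subr //.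
by apply/setP => i; rewrite !inE ffunE.
Qed.

Lemma subv_union u v x : subv [ffun i => u i || v i] x = subv u x && subv v x.
Proof.
apply/forallP/andP => [h|[/forallP ux /forallP vx] i].
  by split; apply/forallP => i; move: (h i); rewrite ffunE; case: (u i); case: (v i).
by rewrite ffunE; move: (ux i) (vx i); case: (u i); case: (v i).
Qed.

(* The product of two monomials is the monomial of the union of their supports. *)
Lemma has_deg_le_andb f g k1 k2 : has_deg_le f k1 -> has_deg_le g k2 ->
  has_deg_le (fun x => f x && g x) (k1 + k2).
Proof.
move=> [c [cf cwt]] [c' [cg c'wt]].
pose U (p : vec n * vec n) : vec n := [ffun i => p.1 i || p.2 i].
exists [ffun w => \big[addb/false]_(p | U p == w) (c p.1 && c' p.2)]; split.
  move=> x; rewrite -cf -cg /anf_eval big_distrl /=; apply/esym.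
  under eq_bigr do rewrite big_distrr /=.
  rewrite pair_bigA (partition_big U xpredT) //=; apply: eq_bigr => w _.
  rewrite ffunE big_distrl /=; apply: eq_bigr => p /eqP <-.
  have := subv_union p.1 p.2 x; rewrite /subv /U => ->.
  by case: (c p.1); case: (c' p.2); rewrite /= ?andbF.
move=> w; rewrite ffunE; case: (pickP (fun p => (U p == w) && (c p.1 && c' p.2))).
  move=> p /andP[/eqP <- /andP[cp c'p]] _.
  exact: leq_trans (wt_union _ _) (leq_add (cwt _ cp) (c'wt _ c'p)).
by move=> none; rewrite big1 // => p Up; move: (none p); rewrite Up.
Qed.

Lemma has_deg_le_big_andb (I : Type) (r : seq I) (F : I -> vec n -> bool) (k : I -> nat) :
  (forall i, has_deg_le (F i) (k i)) ->
  has_deg_le (fun x => \big[andb/true]_(i <- r) F i x) (\sum_(i <- r) k i).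
Proof.
move=> Fdeg; elim: r => [|i r IH].
  by rewrite big_nil; apply: eq_has_deg_le has_deg_le_true => x; rewrite big_nil.
rewrite big_cons; apply: eq_has_deg_le (has_deg_le_andb (Fdeg i) IH) => x.
by rewrite big_cons.
Qed.

Lemma moebius_gt_deg f k u : has_deg_le f k -> k < wt u -> moebius f u = false.
Proof.
move=> [c [cf cwt]] ltku.
have -> : moebius f u = c u by rewrite -moebius_anf_eval; apply: eq_bigr => w _.
by apply/negbTE/negP => /cwt; rewrite leqNgt ltku.
Qed.

Lemma has_alg_degree_moebius f d u :
  has_deg_le f d -> moebius f u -> wt u = d -> has_alg_degree f d.
Proof.
move=> [c [cf cwt]] mfu wtu; exists c; split => //; apply/eqP; rewrite eqn_leq.
apply/andP; split; first by apply/bigmax_leqP.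
have cu : c u by rewrite -moebius_anf_eval /moebius (eq_bigr _ (fun w _ => cf w)).
by rewrite -wtu; apply: leq_bigmax_cond.
Qed.

End AlgebraicNormalForm.

Lemma has_deg_le_xat n k : has_deg_le (fun x : vec n => xat x k) 1.
Proof.
case: n => [|n'].
  apply: eq_has_deg_le (has_deg_le_false 0 1) => x.
  by rewrite /xat; apply/esym/existsP => [[[]]].
pose i0 := Ordinal (ltn_pmod k (ltn0Sn n')); pose e : vec n'.+1 := [ffun j => j == i0].
have wt_e : wt e <= 1.
  rewrite /wt (_ : [set j | e j] = [set i0]) ?cards1 //.
  by apply/setP => j; rewrite !inE ffunE.
apply: eq_has_deg_le (has_deg_le_leq wt_e (has_deg_le_monomial e)) => x.
rewrite (xatE _ _ (ltn0Sn n')) -/i0.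
apply/forallP/idP => [/(_ i0)|xk j]; first by rewrite ffunE eqxx.
by rewrite ffunE; apply/implyP => /eqP ->.
Qed.

Lemma anf_deg_witness n (c : anf n) : 0 < anf_deg c -> exists2 u, c u & wt u = anf_deg c.
Proof.
rewrite /anf_deg; case: (pickP (fun u => c u)) => [v cv _ | none]; last by rewrite big_pred0.
have : 0 < #|[pred u | c u]| by apply/card_gt0P; exists v.
by move/(eq_bigmax_cond (@wt n)) => [u cu ->]; exists u.
Qed.

Lemma has_deg_le_anf_comp n m (c : anf m) (h : vec n -> vec m) :
  (forall j, has_deg_le (fun x => h x j) 1) ->
  has_deg_le (fun x => anf_eval c (h x)) (anf_deg c).
Proof.
move=> hdeg; apply: has_deg_le_big_addb => v _.
have [cv|ncv] := boolP (c v); last by apply: eq_has_deg_le (has_deg_le_false _ _) => x.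
apply: has_deg_le_leq (leq_bigmax_cond _ cv) _.
have -> : wt v = \sum_(j < m) (v j : nat).
  rewrite /wt -sum1_card big_mkcond /=; apply: eq_bigr => j _.
  by rewrite inE; case: (v j).
apply: eq_has_deg_le (has_deg_le_big_andb _ (F := fun j x => v j ==> h x j) _) => [x|j].
  by rewrite /= -big_andE [RHS]big_mkcond; apply: eq_bigr => j _; case: (v j).
case: (v j); first exact: hdeg.
by apply: eq_has_deg_le (has_deg_le_true _) => x.
Qed.

Section OddPeriodRecurrence.
Variables (L : nat) (V W : nat -> bool).
Hypotheses (oddL : odd L) (V_periodic : forall a, V (a + L) = V a)
           (W_periodic : forall a, W (a + L) = W a).
Hypothesis VW_rec :
  forall a, V a (+) W a = (V a.+1 && ~~ V a.+2) (+) (W a.+1 && ~~ W a.+2).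

Let s a := V a (+) W a.

Let s_periodic a c : s (a + c * L) = s a.
Proof.
elim: c => [|c IH]; first by rewrite addn0.
by rewrite mulSn (addnC L) addnA /s V_periodic W_periodic.
Qed.

Let s_zero_pair_back a : ~~ s a.+1 -> ~~ s a.+2 -> ~~ s a.
Proof.
rewrite /s; have := VW_rec a.
by case: (V a); case: (W a); case: (V a.+1); case: (W a.+1); case: (V a.+2); case: (W a.+2).
Qed.

Let s_zero_pair_all a : ~~ s a -> ~~ s a.+1 -> forall b, ~~ s b.
Proof.
have back k c : ~~ s (c + k) -> ~~ s (c + k).+1 -> ~~ s c.
  elim: k c => [|k IH] c; first by rewrite addn0.
  by rewrite addnS => s1 s2; apply: IH => //; apply: s_zero_pair_back.
move=> sa sa1 b; have b_le : b <= b * L by rewrite leq_pmulr // odd_gt0.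
apply: (back (a + b * L - b)); rewrite subnKC ?ltn_addl ?(leq_trans b_le) ?leq_addl //.
  by rewrite s_periodic.
by rewrite -addSn s_periodic.
Qed.

(* If [s] were constantly one, [V] would alternate, which an odd period forbids. *)
Let s_has_zero : exists p, ~~ s p.
Proof.
have [/forallP s1|] := boolP [forall i : 'I_L, s i]; last first.
  by rewrite negb_forall => /existsP [p sp]; exists p.
have L0 : 0 < L by rewrite odd_gt0.
have sT a : s a.
  have := s_periodic (a %% L) (a %/ L); rewrite addnC -divn_eq => ->.
  exact: s1 (Ordinal (ltn_pmod a L0)).
have alt a : V a.+2 = ~~ V a.+1.
  move: (VW_rec a) (sT a) (sT a.+1) (sT a.+2); rewrite /s.
  by case: (V a); case: (W a); case: (V a.+1); case: (W a.+1); case: (V a.+2); case: (W a.+2).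
have Vodd k : V k.+1 = V 1 (+) odd k.
  by elim: k => [|k IH]; rewrite ?addbF // alt IH addbN.
by move: (V_periodic 1); rewrite add1n Vodd oddL; case: (V 1).
Qed.

Let s_zero_back2 a : (forall b, s b || s b.+1) -> ~~ s a.+2 -> ~~ s a.
Proof.
move=> no_zero_pair sa2.
have sa1 : s a.+1 by move: (no_zero_pair a.+1); rewrite (negbTE sa2) orbF.
have sa3 : s a.+3 by move: (no_zero_pair a.+2); rewrite (negbTE sa2).
move: (VW_rec a) (VW_rec a.+1) sa1 sa2 sa3; rewrite /s.
by case: (V a); case: (W a); case: (V a.+1); case: (W a.+1);
   case: (V a.+2); case: (W a.+2); case: (V a.+3); case: (W a.+3).
Qed.

Lemma odd_periodic_rec_eq a : V a = W a.
Proof.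
suff : ~~ s a by rewrite /s; case: (V a); case: (W a).
apply/negP => sa.
have no_zero_pair b : s b || s b.+1.
  apply/negPn/negP; rewrite negb_or => /andP[sb sb1].
  by move: (s_zero_pair_all sb sb1 a); rewrite sa.
have [p sp] := s_has_zero.
have sp1 : s p.+1 by move: (no_zero_pair p); rewrite (negbTE sp).
(* Zeros of [s] now propagate backwards in steps of two, and [L] is odd. *)
have back k c : ~~ s (c + k.*2) -> ~~ s c.
  elim: k c => [|k IH] c; first by rewrite addn0.
  by rewrite doubleS !addnS => sc; apply/IH/s_zero_back2.
have e : p.+1 + (L./2).*2 = p + 1 * L.
  by have := odd_double_half L; rewrite oddL mul1n; lia.
by move: (back (L./2) p.+1); rewrite e s_periodic sp sp1 => /(_ isT).
Qed.

End OddPeriodRecurrence.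

(* Up to the contribution of [b], the coefficient vector of [y] in [f_t] written in the
   coordinates [vec_of_pair (u, y)] defined below. *)
Definition pi_t m t (u : vec m) : vec m :=
  [ffun k : 'I_m => (xat u k && xat u (k + t)) (+) true (+) xat u k (+) xat u (k + (m - t))].

Section PiInjective.
Variables (m t : nat).
Hypotheses (m_gt0 : 0 < m) (t_lt_m : t < m).

Lemma pi_t_eq_rec (u w : vec m) k : pi_t t u = pi_t t w ->
  xat u k (+) xat w k =
  (xat u (k + t) && ~~ xat u (k + t + t)) (+) (xat w (k + t) && ~~ xat w (k + t + t)).
Proof.
move=> /(congr1 (fun f : vec m => f (Ordinal (ltn_pmod (k + t) m_gt0)))).
rewrite !ffunE /=.
have e1 (x : vec m) : xat x ((k + t) %% m) = xat x (k + t).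
  by apply: xat_eqmod; rewrite modn_mod.
have e2 (x : vec m) : xat x ((k + t) %% m + t) = xat x (k + t + t).
  by apply: xat_eqmod; rewrite modnDml.
have e3 (x : vec m) : xat x ((k + t) %% m + (m - t)) = xat x k.
  rewrite -(xatDr x k); apply: xat_eqmod; rewrite modnDml.
  by congr (_ %% _); lia.
rewrite !e1 !e2 !e3.
by case: (xat u k); case: (xat w k); case: (xat u (k + t)); case: (xat w (k + t));
   case: (xat u (k + t + t)); case: (xat w (k + t + t)).
Qed.

(* Along the orbit [j, j + t, j + 2t, ...], of odd length [m %/ gcdn m t], two preimages
   satisfy the recurrence of [odd_periodic_rec_eq]. *)
Lemma pi_t_inj : odd (m %/ gcdn m t) -> injective (@pi_t m t).
Proof.
move=> oddL u w eq_pi; apply/ffunP => j; rewrite -!xat_ord.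
pose L := m %/ gcdn m t.
have Lt : L * t = t %/ gcdn m t * m.
  by rewrite /L divn_mulAC ?dvdn_gcdl // mulnC -divn_mulAC ?dvdn_gcdr.
have orbit_periodic (x : vec m) a : xat x (j + (a + L) * t) = xat x (j + a * t).
  by rewrite mulnDl Lt addnA xatDMr.
have := odd_periodic_rec_eq (V := fun a => xat u (j + a * t))
  (W := fun a => xat w (j + a * t)) oddL (orbit_periodic u) (orbit_periodic w) => /(_ _ 0).
rewrite mul0n addn0; apply => a.
have next k : j + k * t + t = j + k.+1 * t by rewrite mulSnr addnA.
by rewrite (pi_t_eq_rec _ eq_pi) !next.
Qed.

End PiInjective.

Definition vec_of_pair m (p : vec m * vec m) : vec m.*2 :=
  [ffun i : 'I_m.*2 => xat p.2 i (+) ((m <= i) && xat p.1 i)].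

Definition pair_of_vec m (x : vec m.*2) : vec m * vec m :=
  ([ffun j : 'I_m => xat x j (+) xat x (j + m)], [ffun j : 'I_m => xat x j]).

Section CoordinateChange.
Variable m : nat.
Hypothesis m_gt0 : 0 < m.

Let m_le_double : m <= m.*2. Proof. by rewrite -addnn leq_addr. Qed.

Lemma xat_vec_of_pair (p : vec m * vec m) k :
  xat (vec_of_pair p) k = xat p.2 k (+) ((m <= k %% m.*2) && xat p.1 k).
Proof.
rewrite (xatE _ _ (leq_trans m_gt0 m_le_double)) ffunE /=.
have m_dvd : m %| m.*2 by rewrite -muln2 dvdn_mulr.
by congr (_ (+) (_ && _)); apply: xat_eqmod; rewrite modn_dvdm.
Qed.

Lemma xat_vec_of_pair_lo (p : vec m * vec m) k : k < m -> xat (vec_of_pair p) k = xat p.2 k.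
Proof.
move=> ltkm; rewrite xat_vec_of_pair modn_small ?(leq_trans ltkm) //.
by rewrite leqNgt ltkm addbF.
Qed.

Lemma xat_vec_of_pair_hi (p : vec m * vec m) k : m <= k < m.*2 ->
  xat (vec_of_pair p) k = xat p.2 k (+) xat p.1 k.
Proof. by move=> /andP[lemk ltk2m]; rewrite xat_vec_of_pair modn_small // lemk. Qed.

Lemma xat_vec_of_pair_Dm (p : vec m * vec m) i : i < m ->
  xat (vec_of_pair p) (i + m) = xat p.2 i (+) xat p.1 i.
Proof.
move=> ltim; rewrite xat_vec_of_pair_hi ?xatDr // leq_addl /=.
by rewrite -addnn ltn_add2r.
Qed.

Lemma vec_of_pairK : cancel (@vec_of_pair m) (@pair_of_vec m).
Proof.
move=> [u y]; congr (_, _); apply/ffunP => j; rewrite ffunE.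
  rewrite xat_vec_of_pair_Dm // xat_vec_of_pair_lo //= !xat_ord.
  by case: (y j); case: (u j).
by rewrite xat_vec_of_pair_lo //= xat_ord.
Qed.

Lemma pair_of_vecK : cancel (@pair_of_vec m) (@vec_of_pair m).
Proof.
move=> x; apply/ffunP => i; rewrite ffunE /= !xat_ffun //.
have [lemi|ltim] := leqP m i; last by rewrite modn_small // xat_ord addbF.
have i_mod : i %% m = i - m.
  by rewrite -{1}(subnK lemi) modnDr modn_small // ltn_subLR // addnn.
rewrite i_mod (xat_ffun (fun k => xat x k (+) xat x (k + m))) // i_mod subnK //.
by rewrite !xat_ord; case: (x i); case: (xat x (i - m)).
Qed.

Lemma bijective_vec_of_pair : bijective (@vec_of_pair m).
Proof. by exists (@pair_of_vec m); [apply: vec_of_pairK | apply: pair_of_vecK]. Qed.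

Variable t : nat.
Hypothesis t_lt_m : t < m.

Lemma xat_vec_of_pair_Dt (p : vec m * vec m) i : i < m ->
  xat (vec_of_pair p) (i + t) = xat p.2 (i + t) (+) ((m <= i + t) && xat p.1 (i + t)).
Proof.
move=> ltim; have [lemit|ltitm] /= := leqP m (i + t).
  by rewrite xat_vec_of_pair_hi // lemit -addnn /=; lia.
by rewrite xat_vec_of_pair_lo // addbF.
Qed.

Lemma xat_vec_of_pair_DmDt (p : vec m * vec m) i : i < m ->
  xat (vec_of_pair p) (i + m + t) =
  xat p.2 (i + t) (+) (~~ (m <= i + t) && xat p.1 (i + t)).
Proof.
move=> ltim; have [lemit|ltitm] /= := leqP m (i + t).
  have -> : i + m + t = i + t - m + m.*2 by rewrite -addnn; lia.
  rewrite xatDr xat_vec_of_pair_lo; last by lia.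
  by rewrite addbF -{2}(subnK lemit) xatDr.
by rewrite addnAC xat_vec_of_pair_Dm // !xatDr.
Qed.

End CoordinateChange.

Definition quad_t m t (w : vec m) : bool :=
  \big[addb/false]_(i < m) ((i + t < m) && xat w i && xat w (i + t)).

Section WalshIdentity.
Variables (m t : nat) (gamma : anf m) (b : vec m.*2).
Hypotheses (m_gt0 : 0 < m) (t_lt_m : t < m).

Definition lin_part (u : vec m) : vec m :=
  [ffun k : 'I_m => pi_t t u k (+) (xat b k (+) xat b (k + m))].

Definition phase (u : vec m) : bool :=
  quad_t t u (+) \big[addb/false]_(i < m) (xat u i && xat b (i + m)) (+) anf_eval gamma u.

Lemma ft_vec_of_pair (u y : vec m) :
  f_t t gamma (vec_of_pair (u, y)) (+) dotb (vec_of_pair (u, y)) b =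
  dotb y (lin_part u) (+) phase u.
Proof.
set x := vec_of_pair (u, y).
have gamma_arg : [ffun j : 'I_m => xat x j (+) xat x (j + m)] = u.
  apply/ffunP => j; rewrite ffunE xat_vec_of_pair_Dm // xat_vec_of_pair_lo //= !xat_ord.
  by case: (y j); case: (u j).
have regroup (a1 a2 a3 a4 a5 a6 g : bool) : a1 (+) a2 (+) a3 (+) a4 (+) a5 (+) a6 = false ->
    a1 (+) a2 (+) g (+) a3 = a4 (+) (a5 (+) a6 (+) g).
  by case: a1; case: a2; case: a3; case: a4; case: a5; case: a6; case: g.
rewrite /f_t gamma_arg (dotbE x) (dotbE y) /phase /quad_t.
rewrite (big_ord_double _ _ (fun i => (xat x i && xat x (i + t) && xat x (i + m))
  (+) (xat x i && xat x (i + t)))) (big_ord_double _ _ (fun i => xat x i && xat b i)).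
apply: regroup; rewrite -!big_split /=.
pose G k := xat y k && xat u (k + (m - t)).
rewrite (eq_bigr (fun i : 'I_m => G (i + t) (+) G i)).
  rewrite big_split /= big_ord_shift ?addbb // => k.
  by rewrite /G addnAC !xatDr.
move=> i _; have ltim := ltn_ord i.
rewrite /G xat_vec_of_pair_DmDt // xat_vec_of_pair_Dt // -addnA addnn xatDr.
rewrite xat_vec_of_pair_Dm // xat_vec_of_pair_lo //= (xat_ord (lin_part u)) !ffunE !xat_ord.
rewrite (_ : i + t + (m - t) = i + m); last by lia.
rewrite xatDr xat_ord ltnNge.
case: (y i); case: (u i); case: (xat y (i + t)); case: (xat u (i + t));
  case: (m <= i + t); case: (xat b i); case: (xat b (i + m));
  by case: (xat u (i + (m - t))).
Qed.

End WalshIdentity.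

Section Bent.
Local Open Scope ring_scope.

Lemma sum_sign_dotb n (a : vec n) :
  \sum_(y : vec n) ((-1) ^+ dotb y a : int) = if a == [ffun => false] then (2 ^ n)%:R else 0.
Proof.
have [->|/eqP a_neq0] := eqP.
  rewrite (eq_bigr (fun _ => 1)) => [|y _]; last first.
    by rewrite /dotb big1 // => i _; rewrite ffunE andbF.
  by rewrite sumr_const card_ffun card_bool card_ord.
have [i ai] : exists i, a i.
  apply/existsP; apply: contraR a_neq0; rewrite negb_exists => /forallP a0.
  by apply/eqP/ffunP => j; rewrite ffunE; apply/negbTE.
pose flip (y : vec n) : vec n := [ffun j => y j (+) (j == i)].
have flipK : involutive flip.
  by move=> y; apply/ffunP => j; rewrite !ffunE -addbA addbb addbF.
have dotb_flip y : dotb (flip y) a = ~~ dotb y a.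
  rewrite /dotb (bigD1 i) //= [in RHS](bigD1 i) //= !ffunE eqxx ai.
  rewrite (eq_bigr (fun j => y j && a j)) => [|j /negbTE neq_ji]; last first.
    by rewrite ffunE neq_ji addbF.
  by case: (y i); case: (\big[addb/false]_(j < n | j != i) (y j && a j)).
set S := \sum_(y : vec n) _.
have : S = - S.
  rewrite {1}/S (reindex_inj (inv_inj flipK)) /S -sumrN.
  by apply: eq_bigr => y _; rewrite dotb_flip; case: (dotb y a); rewrite ?expr0 ?expr1 ?opprK.
lia.
Qed.

Variables (m t : nat) (gamma : anf m).
Hypotheses (m_gt0 : (0 < m)%N) (t_lt_m : (t < m)%N).

Lemma walsh_ft b : walsh (f_t t gamma) b =
  \sum_(u : vec m) (-1) ^+ phase t gamma b u *
    (if lin_part t b u == [ffun => false] then (2 ^ m)%:R else 0).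
Proof.
rewrite /walsh (reindex _ (onW_bij _ (bijective_vec_of_pair m_gt0))).
rewrite (eq_bigr (fun p => (-1) ^+ phase t gamma b p.1 * (-1) ^+ dotb p.2 (lin_part t b p.1)));
  last by move=> [u y] _; rewrite ft_vec_of_pair // signr_addb mulrC.
rewrite -(pair_bigA _
  (fun u y => (-1) ^+ phase t gamma b u * (-1) ^+ dotb y (lin_part t b u))).
by apply: eq_bigr => u _; rewrite -mulr_sumr sum_sign_dotb.
Qed.

Lemma bent_ft : odd (m %/ gcdn m t) -> bent (f_t t gamma).
Proof.
move=> oddL b; pose bsum : vec m := [ffun k : 'I_m => xat b k (+) xat b (k + m)].
have lin_eq0 u : (lin_part t b u == [ffun => false]) = (pi_t t u == bsum).
  apply/eqP/eqP => [lin0|pi_u]; apply/ffunP => k; last first.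
    by rewrite /lin_part ffunE pi_u !ffunE addbb.
  move/ffunP: lin0 => /(_ k); rewrite !ffunE.
  by move/(congr1 (addb^~ (xat b k (+) xat b (k + m)))); rewrite -addbA addbb addbF.
have pi_inj := pi_t_inj m_gt0 t_lt_m oddL.
have [u0 pi_u0] : exists u0, pi_t t u0 = bsum.
  by have /codomP [u0 ->] := injF_onto pi_inj bsum; exists u0.
rewrite walsh_ft (bigD1 u0) //= big1 ?addr0 => [|u neq_u]; last first.
  by rewrite lin_eq0 -pi_u0 (inj_eq pi_inj) (negbTE neq_u) mulr0.
rewrite lin_eq0 pi_u0 eqxx doubleK natz.
by case: (phase t gamma b u0); [right; rewrite expr1 mulN1r | left; rewrite expr0 mul1r].
Qed.

End Bent.

Lemma rot_ft m t (gamma : anf m) : 0 < m ->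
  rotation_symmetric (anf_eval gamma) -> rotation_symmetric (f_t t gamma).
Proof.
move=> m_gt0 gamma_rot x; have m2_gt0 : 0 < m.*2 by rewrite double_gt0.
pose H k := xat x k (+) xat x (k + m).
have H_periodic k : H (k + m) = H k.
  by rewrite /H -addnA addnn xatDr addbC.
rewrite /f_t; have -> : [ffun j : 'I_m => xat (Defs.rot x) j (+) xat (Defs.rot x) (j + m)] =
          Defs.rot [ffun j : 'I_m => H j].
  apply/ffunP => j; rewrite !ffunE !xat_rot // xat_ffun // periodic_modn //.
  by rewrite /H addnAC.
rewrite gamma_rot; congr (_ (+) _ (+) _).
- pose F k := (xat x k && xat x (k + t) && xat x (k + m)) (+) (xat x k && xat x (k + t)).
  rewrite (eq_bigr (fun i : 'I_m.*2 => F (i + 1))) => [|i _]; last first.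
    by rewrite !xat_rot // /F (addnAC i t) (addnAC i m).
  by apply: big_ord_shift => k; rewrite /F (addnAC k _ t) (addnAC k _ m) !xatDr.
- pose F k := xat x k && xat x (k + m).
  rewrite (eq_bigr (fun i : 'I_m => F (i + 1))) => [|i _]; last first.
    by rewrite !xat_rot // /F (addnAC i m).
  by apply: big_ord_shift => k; rewrite /F -addnA addnn xatDr andbC.
Qed.

Lemma has_deg_le_ft m t (gamma : anf m) : 3 <= anf_deg gamma ->
  has_deg_le (f_t t gamma) (anf_deg gamma).
Proof.
move=> deg_ge3.
have xat2 i j : has_deg_le (fun x : vec m.*2 => xat x i && xat x j) 2.
  exact: has_deg_le_andb (has_deg_le_xat _ i) (has_deg_le_xat _ j).
apply: has_deg_le_addb; first apply: has_deg_le_addb.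
- apply: has_deg_le_big_addb => i _.
  apply: has_deg_le_addb (has_deg_le_leq (ltnW deg_ge3) (xat2 _ _)).
  exact: has_deg_le_leq deg_ge3 (has_deg_le_andb (xat2 _ _) (has_deg_le_xat _ _)).
- by apply: has_deg_le_big_addb => i _; apply: has_deg_le_leq (ltnW deg_ge3) (xat2 _ _).
apply: has_deg_le_anf_comp => j; apply: eq_has_deg_le (has_deg_le_addb
  (has_deg_le_xat _ j) (has_deg_le_xat _ (j + m))) => x.
by rewrite ffunE.
Qed.

Lemma has_deg_le_quad_t m t : has_deg_le (@quad_t m t) 2.
Proof.
apply: has_deg_le_big_addb => i _; case: (i + t < m) => /=.
  exact: has_deg_le_andb (has_deg_le_xat _ _) (has_deg_le_xat _ _).
exact: has_deg_le_false.
Qed.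

Section Restriction.
Variable m : nat.

Lemma vec_of_pair_diag (a : vec m) (i : 'I_m.*2) : vec_of_pair (a, a) i = (i < m) && xat a i.
Proof. by rewrite ffunE /=; case: (leqP m i) => /=; rewrite ?addbb ?addbF. Qed.

Let m_le_double : m <= m.*2. Proof. by rewrite -addnn leq_addr. Qed.

Lemma subv_vec_of_pair_diag (a v : vec m) :
  subv (vec_of_pair (a, a)) (vec_of_pair (v, v)) = subv a v.
Proof.
apply/forallP/forallP => sub_av j.
  by move: (sub_av (widen_ord m_le_double j)); rewrite !vec_of_pair_diag /= ltn_ord !xat_ord.
rewrite !vec_of_pair_diag; case: (ltnP j m) => //= ltjm.
by move: (sub_av (Ordinal ltjm)); rewrite -(xat_ord a) -(xat_ord v).
Qed.

Lemma wt_vec_of_pair_diag (a : vec m) : wt (vec_of_pair (a, a)) = wt a.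
Proof.
rewrite /wt (_ : [set i | _] = widen_ord m_le_double @: [set j | a j]).
  by apply: card_imset => i j /(congr1 val) /= /val_inj.
apply/setP => i; rewrite inE vec_of_pair_diag; apply/idP/imsetP.
  move=> /andP[ltim ai]; exists (Ordinal ltim); first by rewrite inE -xat_ord.
  exact: val_inj.
by move=> [j]; rewrite inE => aj ->; rewrite /= ltn_ord xat_ord.
Qed.

(* The monomials below [x_0 ... x_(m-1)] only involve the first half of the variables. *)
Lemma moebius_vec_of_pair_diag (f : vec m.*2 -> bool) v :
  0 < m -> moebius f (vec_of_pair (v, v)) = moebius (fun w => f (vec_of_pair (w, w))) v.
Proof.
move=> m_gt0; rewrite /moebius.
rewrite (reindex_onto (fun w => vec_of_pair (w, w)) (fun x => [ffun j : 'I_m => xat x j])) /=.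
  apply: eq_bigl => a; rewrite subv_vec_of_pair_diag.
  have -> : [ffun j : 'I_m => xat (vec_of_pair (a, a)) j] = a.
    by apply/ffunP => j; rewrite ffunE xat_vec_of_pair_lo //= xat_ord.
  by rewrite eqxx andbT.
move=> x /forallP sub_x; apply/ffunP => i; rewrite vec_of_pair_diag.
have [ltim|leim] /= := ltnP i m.
  by rewrite xat_ffun // modn_small // xat_ord.
by move: (sub_x i); rewrite vec_of_pair_diag ltnNge leim /=; case: (x i).
Qed.

Variables (t : nat) (gamma : anf m).
Hypotheses (m_gt0 : 0 < m) (t_lt_m : t < m).

Lemma ft_vec_of_pair_diag (w : vec m) :
  f_t t gamma (vec_of_pair (w, w)) = quad_t t w (+) anf_eval gamma w.
Proof.
set x := vec_of_pair (w, w).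
have x_hi i : i < m -> xat x (i + m) = false.
  by move=> ltim; rewrite xat_vec_of_pair_Dm //= addbb.
have gamma_arg : [ffun j : 'I_m => xat x j (+) xat x (j + m)] = w.
  by apply/ffunP => j; rewrite ffunE x_hi // addbF xat_vec_of_pair_lo //= xat_ord.
rewrite /f_t gamma_arg (big_ord_double _ _
  (fun i => (xat x i && xat x (i + t) && xat x (i + m)) (+) (xat x i && xat x (i + t)))).
rewrite [X in _ (+) X (+) _]big1 ?addbF => [|i _]; last by rewrite x_hi ?andbF.
congr (_ (+) _); apply: eq_bigr => i _; have ltim := ltn_ord i.
rewrite x_hi // xat_vec_of_pair_DmDt // xat_vec_of_pair_Dt // xat_vec_of_pair_lo //= ltnNge.
by case: (m <= i + t); case: (xat w i); case: (xat w (i + t)).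
Qed.

End Restriction.

Lemma deg_ft m t (gamma : anf m) : 0 < m -> t < m -> 3 <= anf_deg gamma ->
  has_alg_degree (f_t t gamma) (anf_deg gamma).
Proof.
move=> m_gt0 t_lt_m deg_ge3.
have [v gamma_v wt_v] := anf_deg_witness (leq_trans (isT : 0 < 3) deg_ge3).
apply: (has_alg_degree_moebius (has_deg_le_ft t deg_ge3) _
  (etrans (wt_vec_of_pair_diag v) wt_v)).
rewrite moebius_vec_of_pair_diag // /moebius.
rewrite (eq_bigr _ (fun w _ => ft_vec_of_pair_diag gamma m_gt0 t_lt_m w)).
rewrite -/(moebius (fun w => quad_t t w (+) anf_eval gamma w) v) moebius_addb.
by rewrite moebius_anf_eval gamma_v (moebius_gt_deg (has_deg_le_quad_t m t)) // wt_v.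
Qed.

Theorem theorem2 (m t : nat) (gamma : anf m) :
  2 <= m -> 1 <= t <= m - 1 -> odd (m %/ gcdn m t) ->
  bent (f_t t gamma) /\
  (forall d : nat,
     rotation_symmetric (anf_eval gamma) -> anf_deg gamma = d -> 3 <= d ->
     rotation_symmetric (f_t t gamma) /\ has_alg_degree (f_t t gamma) d).
Proof.
move=> m_ge2 /andP[t_ge1 t_le] oddL.
have m_gt0 : 0 < m by lia.
have t_lt_m : t < m by lia.
split; first exact: bent_ft.
move=> d gamma_rot <- deg_ge3.
by split; [apply: rot_ft | apply: deg_ft].
Qed.
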